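(* Let $\alpha:\mathcal X\to[\alpha_{\min},\alpha_{\max}]$ with $0<\alpha_{\min}\le\alpha_{\max}<1$, and let $\mathcal A(x,m)=\{\mu\in\mathcal P(\mathcal X):\mu(y)\le m(y)/\alpha(x)\ \forall y\in\mathcal X\}$ (the dual sets of the Average Value at Risk mapping $\sigma(x,m,v)=\min_{\eta\in\mathbb R}\{\eta+\frac1{\alpha(x)}\sum_y m(y)\max(0,v(y)-\eta)\}$). Then the associated risk multikernel $\mathfrak M$ is semi-differentiable at $\mathcal I$ in every direction $K\in\mathcal T_{\mathcal Q}(\mathcal I)$, with semi-derivative \[ \mathfrak D(K)=\Big\{D\in\mathcal T_{\mathcal Q}(\mathcal I): 0\le D(y|x)\le\frac{K(y|x)}{\alpha(x)}\ \text{for all } x,y\in\mathcal X,\ y\ne x,\ \ D(\mathcal X|x)=0\ \text{for all }x\in\mathcal X\Big\}. \]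
   Context: $\mathcal X$ is a finite set, $\mathcal P(\mathcal X)$ the probability measures on $\mathcal X$, $\mathcal S$ the vector space of signed kernels $K:\mathcal X\to\mathcal M(\mathcal X)$, written $K(y|x)$, with $K(\mathcal X|x)=\sum_yK(y|x)$ and norm $\|K\|=\sup\{\sum_{y}\varphi(y)K(y|x):x\in\mathcal X,\ -1\le\varphi\le1\}$; $\mathcal Q\subset\mathcal S$ the stochastic kernels; $\mathcal I(x)=\delta_x$. $\mathrm d(K,B)=\inf_{M\in B}\|K-M\|$ ($=+\infty$ if $B=\emptyset$), and $\mathrm{dist}(\mathcal S_1,\mathcal S_2)=\max(\sup_{K\in\mathcal S_1}\mathrm d(K,\mathcal S_2),\sup_{K\in\mathcal S_2}\mathrm d(K,\mathcal S_1))$. The tangent cone is $\mathcal T_{\mathcal Q}(\mathcal I)=\{K\in\mathcal S:\lim_{\tau\downarrow0}\mathrm d(K,\frac1\tau(\mathcal Q-\mathcal I))=0\}$. The risk multikernel associated with $\mathcal A$ is $\mathfrak M(Q)=\{M\in\mathcal Q: M(x)\in\mathcal A(x,Q(x))\ \forall x\}$. $\mathfrak M$ is semi-differentiable at $\mathcal I$ in direction $K\in\mathcal T_{\mathcal Q}(\mathcal I)$ with semi-derivative $\mathfrak D(K)$ (a nonempty subset of $\mathcal S$) if for every $\varepsilon_n\downarrow0$ and every $K_n\to K$ with $K_n\in\mathcal T_{\mathcal Q}(\mathcal I)$, $\lim_{n}\mathrm{dist}\big(\frac1{\varepsilon_n}[\mathfrak M(\mathcal I+\varepsilon_nK_n)-\mathcal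 I],\mathfrak D(K)\big)=0$. *)

From HB Require Import structures.
From mathcomp Require Import all_boot.
From Stdlib Require Import Reals.
Set Implicit Arguments. Unset Strict Implicit. Unset Printing Implicit Defensive.
Open Scope R_scope.

Lemma Rplus_assoc' : associative Rplus.
Proof. by move=> a b c; rewrite Rplus_assoc. Qed.
HB.instance Definition _ := Monoid.isComLaw.Build R 0%R Rplus
  Rplus_assoc' Rplus_comm Rplus_0_l.

Section Kernels.
Variable X : finType.

(* A signed kernel K : X -> M(X); we write  K x y  for  K(y|x). *)
Definition kernel := X -> X -> R.

Definition kmass (K : kernel) (x : X) : R := \big[Rplus/0]_(y : X) K x y.

Definition kadd (K M : kernel) : kernel := fun x y => K x y + M x y.
Definition ksub (K M : kernel) : kernel := fun x y => K x y - M x y.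
Definition kscale (c : R) (K : kernel) : kernel := fun x y => c * K x y.

Definition kid : kernel := fun x y => if y == x then 1 else 0.

(* ||K|| <= r, where ||K|| = sup { sum_y phi(y) K(y|x) : x in X, -1 <= phi <= 1 } *)
Definition norm_le (K : kernel) (r : R) : Prop :=
  forall (x : X) (phi : X -> R), (forall y, -1 <= phi y <= 1) ->
    \big[Rplus/0]_(y : X) (phi y * K x y) <= r.

Definition is_prob (mu : X -> R) : Prop :=
  (forall y, 0 <= mu y) /\ \big[Rplus/0]_(y : X) mu y = 1.

Definition stochastic (K : kernel) : Prop := forall x, is_prob (K x).

(* Tangent cone T_Q(I): lim_{tau -> 0+} d(K, (1/tau)(Q - I)) = 0, unfolded:
   for every eps > 0 there is tau0 > 0 such that for all tau in (0,tau0)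
   some M in Q satisfies ||K - (1/tau)(M - I)|| <= eps. *)
Definition tangent_cone (K : kernel) : Prop :=
  forall eps, 0 < eps -> exists tau0, 0 < tau0 /\
    forall tau, 0 < tau < tau0 ->
      exists M, stochastic M /\
        norm_le (ksub K (kscale (/ tau) (ksub M kid))) eps.

(* Convergence lim_n dist(S1 n, S2) = 0 (Hausdorff-type distance with
   d(K,emptyset)=+oo), unfolded: for every eps > 0, eventually every element
   of each set is within norm eps of some element of the other set. *)
Definition dist_to_zero (S1 : nat -> kernel -> Prop) (S2 : kernel -> Prop) :
    Prop :=
  forall eps, 0 < eps -> exists N : nat, forall n : nat, (N <= n)%nat ->
    (forall K, S1 n K -> exists M, S2 M /\ norm_le (ksub K M) eps) /\
    (forall M, S2 M -> exists K, S1 n K /\ norm_le (ksub M K) eps).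

Definition risk_multikernel (A : X -> (X -> R) -> (X -> R) -> Prop)
    (Q : kernel) (M : kernel) : Prop :=
  stochastic M /\ forall x, A x (Q x) (M x).

Definition semi_differentiable (MM : kernel -> kernel -> Prop)
    (K : kernel) (D : kernel -> Prop) : Prop :=
  (exists D0, D D0) /\
  forall (epsn : nat -> R) (Kn : nat -> kernel),
    (forall n, 0 < epsn n) ->
    (forall n, epsn (S n) <= epsn n) ->
    (forall d, 0 < d -> exists N : nat, forall n, (N <= n)%nat -> epsn n <= d) ->
    (forall n, tangent_cone (Kn n)) ->
    (forall d, 0 < d -> exists N : nat, forall n, (N <= n)%nat ->
        norm_le (ksub (Kn n) K) d) ->
    dist_to_zero
      (fun n L => exists M, MM (kadd kid (kscale (epsn n) (Kn n))) M /\
                  L = kscale (/ epsn n) (ksub M kid))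
      D.

Definition avar_dual (alpha : X -> R) (x : X) (m : X -> R) (mu : X -> R) : Prop :=
  is_prob mu /\ forall y, mu y <= m y / alpha x.

Definition avar_semideriv (alpha : X -> R) (K : kernel) (D : kernel) : Prop :=
  tangent_cone D /\
  (forall x y, y <> x -> 0 <= D x y <= K x y / alpha x) /\
  (forall x, kmass D x = 0).

End Kernels.

From HB Require Import structures.
From mathcomp Require Import all_boot.
From Stdlib Require Import Reals Lra FunctionalExtensionality.
Open Scope R_scope.
Set Implicit Arguments. Unset Strict Implicit.

(* The tangent cone T_Q(I) consists exactly of the rate kernels: nonnegative
   off-diagonal entries and zero row sums.  For small t > 0 the difference
   quotient (M(I + t K_n) - I) / t is the set of rate kernels L with
   L(y|x) <= K_n(y|x) / alpha(x) off the diagonal: the AVaR bound on the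
   diagonal is inactive because alpha < 1, and I + t L stays nonnegative
   because alpha > 0.  The claimed semi-derivative is the same set with K in
   place of K_n.  Two such sets are Hausdorff-close: clipping the off-diagonal
   entries of a member of one set by the bound of the other and restoring zero
   row sums on the diagonal moves it by at most 2 ||K_n - K|| / alpha_min. *)

Section RealSums.
Context {I : finType}.
Implicit Types (P : pred I) (f g : I -> R).

Lemma sum_le P f g :
  (forall i, P i -> f i <= g i) ->
  \big[Rplus/0]_(i | P i) f i <= \big[Rplus/0]_(i | P i) g i.
Proof. by move=> fg; apply: (big_ind2 (fun a b => a <= b)) => [|*|]; [lra|lra|]. Qed.

Lemma sum_ge0 P f :
  (forall i, P i -> 0 <= f i) -> 0 <= \big[Rplus/0]_(i | P i) f i.
Proof. by move=> f_ge0; apply: (big_ind (fun a => 0 <= a)) => [|*|]; [lra|lra|]. Qed.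

Lemma Rabs_sum_le P f :
  Rabs (\big[Rplus/0]_(i | P i) f i) <= \big[Rplus/0]_(i | P i) Rabs (f i).
Proof.
apply: (big_ind2 (fun a b => Rabs a <= b)) => [|a b c d ab cd|i _].
- by rewrite Rabs_R0; lra.
- by have := Rabs_triang a c; lra.
- lra.
Qed.

Lemma sum_scale P c f :
  \big[Rplus/0]_(i | P i) (c * f i) = c * \big[Rplus/0]_(i | P i) f i.
Proof. by apply: (big_ind2 (fun a b => a = c * b)) => [|a b d e -> ->|i _]; ring. Qed.

Lemma sum_sub P f g :
  \big[Rplus/0]_(i | P i) (f i - g i) =
  \big[Rplus/0]_(i | P i) f i - \big[Rplus/0]_(i | P i) g i.
Proof. by apply: (big_ind3 (fun a b c => a = b - c)) => [|a b c d e h -> ->|i _]; lra. Qed.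

Lemma sum_pred_le P f :
  (forall i, 0 <= f i) -> \big[Rplus/0]_(i | P i) f i <= \big[Rplus/0]_i f i.
Proof.
move=> f_ge0; rewrite big_mkcond; apply: sum_le => i _.
by case: (P i); [lra | exact: f_ge0].
Qed.

Lemma entry_le_sum f j : (forall i, 0 <= f i) -> f j <= \big[Rplus/0]_i f i.
Proof.
move=> f_ge0; rewrite (bigD1 j) //=.
by have := @sum_ge0 (fun i => i != j) f (fun i _ => f_ge0 i); lra.
Qed.

End RealSums.

Section Kernels.
Variable X : finType.
Implicit Types (K L M A B : kernel X) (x y : X).

Definition rownorm K x : R := \big[Rplus/0]_y Rabs (K x y).

Lemma norm_leP K r : norm_le K r <-> forall x, rownorm K x <= r.
Proof.
split=> [Kr x | rowK x phi phi_bnd].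
- pose phi y := if Rle_dec 0 (K x y) then 1 else -1.
  have phi_bnd y : -1 <= phi y <= 1 by rewrite /phi; case: Rle_dec => ? /=; lra.
  apply: Rle_trans (Kr x phi phi_bnd).
  apply: sum_le => y _; rewrite /phi /=; case: Rle_dec => Kxy /=.
  + by rewrite Rabs_pos_eq; lra.
  + by rewrite Rabs_left; lra.
- apply: Rle_trans (rowK x); apply: sum_le => y _.
  have := phi_bnd y; case: (Rcase_abs (K x y)) => Kxy.
  + by rewrite Rabs_left //; nra.
  + by rewrite Rabs_pos_eq; nra.
Qed.

Lemma Rabs_entry_le K r x y : norm_le K r -> Rabs (K x y) <= r.
Proof.
move=> /norm_leP Kr; apply: Rle_trans (Kr x).
by rewrite /rownorm; apply: entry_le_sum => z; apply: Rabs_pos.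
Qed.

Definition diag_bound K : R := 1 + \big[Rplus/0]_x Rabs (K x x).

Lemma diag_bound_gt0 K : 0 < diag_bound K.
Proof.
have := @sum_ge0 _ xpredT (fun x => Rabs (K x x)) (fun _ _ => Rabs_pos _).
by rewrite /diag_bound; lra.
Qed.

Lemma Rabs_diag_le_bound K x : 1 + Rabs (K x x) <= diag_bound K.
Proof.
have /= := @entry_le_sum _ (fun x => Rabs (K x x)) x (fun _ => Rabs_pos _).
by rewrite /diag_bound; lra.
Qed.

Lemma Rabs_diag_le_bound_near K L x :
  norm_le (ksub L K) 1 -> Rabs (L x x) <= diag_bound K.
Proof.
move=> LK1; have := Rabs_entry_le x x LK1; have := Rabs_triang (L x x - K x x) (K x x).
have -> : L x x - K x x + K x x = L x x by ring.
by have := Rabs_diag_le_bound K x; rewrite /ksub /diag_bound; lra.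
Qed.

Lemma norm_le_ksubC K L r : norm_le (ksub K L) r -> norm_le (ksub L K) r.
Proof.
move=> /norm_leP KLr; apply/norm_leP => x; apply: Rle_trans (KLr x); right.
by apply: eq_bigr => y _; rewrite /ksub Rabs_minus_sym.
Qed.

Lemma kid_diag x : kid x x = 1.
Proof. by rewrite /kid eqxx. Qed.

Lemma kid_offdiag x y : y != x -> kid x y = 0.
Proof. by rewrite /kid => /negbTE ->. Qed.

Lemma kmass_kid x : kmass (@kid X) x = 1.
Proof.
rewrite /kmass (bigD1 x) //= kid_diag big1; first lra.
exact: kid_offdiag.
Qed.

Lemma kmass_diag K x : kmass K x = K x x + \big[Rplus/0]_(y | y != x) K x y.
Proof. by rewrite /kmass (bigD1 x). Qed.

Lemma rownorm_diag K x :
  rownorm K x = Rabs (K x x) + \big[Rplus/0]_(y | y != x) Rabs (K x y).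
Proof. by rewrite /rownorm (bigD1 x). Qed.

Definition rate_kernel K : Prop :=
  (forall x y, y != x -> 0 <= K x y) /\ (forall x, kmass K x = 0).

Lemma rate_kernel_diag_le0 K x : rate_kernel K -> K x x <= 0.
Proof.
move=> [Koff Kmass]; have := Kmass x; rewrite kmass_diag.
by have := sum_ge0 (Koff x); lra.
Qed.

Lemma diag_ge_of_offdiag_le L K x :
  kmass L x = kmass K x -> (forall y, y != x -> L x y <= K x y) -> K x x <= L x x.
Proof.
rewrite !kmass_diag => LK /(@sum_le _ (fun y => y != x)) offLK; lra.
Qed.

Lemma stochastic_kid_add L t :
  rate_kernel L -> 0 <= t -> (forall x, t * - L x x <= 1) ->
  stochastic (kadd (@kid X) (kscale t L)).
Proof.
move=> [Loff Lmass] t_ge0 Ldiag x; split=> [y|].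
- rewrite /kadd /kscale; have [->|yx] := eqVneq y x.
  + by rewrite kid_diag; have := Ldiag x; lra.
  + by rewrite kid_offdiag //; have := Loff x y yx; nra.
- rewrite /kadd /kscale big_split /= sum_scale.
  by have := kmass_kid x; have := Lmass x; rewrite /kmass => -> ->; ring.
Qed.

Lemma rate_kernel_diff_quotient M t :
  stochastic M -> 0 < t -> rate_kernel (kscale (/ t) (ksub M (@kid X))).
Proof.
move=> Mst t_gt0; have it_gt0 := Rinv_0_lt_compat t t_gt0; split=> [x y yx|x].
- rewrite /kscale /ksub kid_offdiag // Rminus_0_r.
  by have := (Mst x).1 y; nra.
- rewrite /kmass /kscale /ksub sum_scale sum_sub.
  by have := kmass_kid x; rewrite /kmass => ->; rewrite (Mst x).2; ring.
Qed.

Lemma rate_kernel_closed K :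
  (forall e, 0 < e -> exists L, rate_kernel L /\ norm_le (ksub K L) e) ->
  rate_kernel K.
Proof.
move=> approx; split=> [x y yx|x].
- apply: Rle_plus_epsilon => e /approx [L [[Loff _] KL]].
  have := Rabs_entry_le x y KL; have := Loff x y yx.
  by rewrite /ksub; split_Rabs; lra.
- suff: Rabs (kmass K x) <= 0 by have := Rabs_pos (kmass K x); split_Rabs; lra.
  apply: Rle_plus_epsilon => e /approx [L [[_ Lmass] /norm_leP KL]].
  rewrite Rplus_0_l; apply: Rle_trans (KL x).
  have -> : kmass K x = \big[Rplus/0]_y ksub K L x y.
    by rewrite /ksub sum_sub -/(kmass K x) -/(kmass L x) Lmass; ring.
  exact: Rabs_sum_le.
Qed.

Lemma tangent_coneP K : tangent_cone K <-> rate_kernel K.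
Proof.
split=> [tK | rateK].
- apply: rate_kernel_closed => e /tK [tau0 [tau0_gt0 near]].
  have [M [Mst KM]] := near (tau0 / 2) ltac:(lra).
  exists (kscale (/ (tau0 / 2)) (ksub M (@kid X))); split => //.
  by apply: rate_kernel_diff_quotient => //; lra.
- have B_gt0 := diag_bound_gt0 K; set B := diag_bound K in B_gt0 *.
  move=> e e_gt0; exists (/ B); split=> [|tau [tau_gt0 tau_lt]]; first exact: Rinv_0_lt_compat.
  have tauB : tau * B < 1.
    by have := Rmult_lt_compat_r B _ _ B_gt0 tau_lt; rewrite Rinv_l; lra.
  exists (kadd (@kid X) (kscale tau K)); split.
  + apply: stochastic_kid_add => // [|x]; first lra.
    have KB := Rabs_diag_le_bound K x; rewrite -/B in KB.
    by have := Rle_abs (- K x x); rewrite Rabs_Ropp; nra.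
  + apply/norm_leP => x; rewrite /rownorm big1; first lra.
    move=> y _; rewrite /ksub /kadd /kscale.
    have -> : / tau * (kid x y + tau * K x y - kid x y) = K x y by field; lra.
    by rewrite Rminus_diag Rabs_R0.
Qed.

Definition balance K : kernel X :=
  fun x y => if y == x then - \big[Rplus/0]_(z | z != x) K x z else K x y.

Definition kmin K L : kernel X := fun x y => Rmin (K x y) (L x y).

Definition krowdiv (a : X -> R) K : kernel X := fun x y => K x y / a x.

Lemma kmass_krowdiv a K x : kmass (krowdiv a K) x = kmass K x / a x.
Proof.
rewrite /kmass /krowdiv /Rdiv Rmult_comm -sum_scale.
by apply: eq_bigr => y _; rewrite Rmult_comm.
Qed.

Lemma balance_offdiag K x y : y != x -> balance K x y = K x y.
Proof. by rewrite /balance => /negbTE ->. Qed.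

Lemma kmass_balance K x : kmass (balance K) x = 0.
Proof.
have offsum : \big[Rplus/0]_(y | y != x) balance K x y = \big[Rplus/0]_(y | y != x) K x y.
  by apply: eq_bigr => y; apply: balance_offdiag.
by rewrite kmass_diag offsum /balance eqxx; ring.
Qed.

Lemma rate_kernel_balance K :
  (forall x y, y != x -> 0 <= K x y) -> rate_kernel (balance K).
Proof.
move=> Koff; split=> [x y yx|x]; last exact: kmass_balance.
by rewrite balance_offdiag //; apply: Koff.
Qed.

Lemma Rabs_sub_Rmin l a b : l <= a -> Rabs (l - Rmin l b) <= Rabs (a - b).
Proof.
move=> la; have ab_ge0 := Rabs_pos (a - b); have ab_le := Rle_abs (a - b).
rewrite /Rmin; case: Rle_dec => lb /=; first by rewrite Rminus_diag Rabs_R0.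
by rewrite Rabs_pos_eq; lra.
Qed.

(* Clipping the off-diagonal entries of a zero-mass row [L] from above by [B]
   moves it by at most twice the distance from [B] to any upper bound [A] of
   those entries: once off the diagonal, once more on it. *)
Lemma rownorm_sub_balance_kmin L A B x :
  kmass L x = 0 -> (forall y, y != x -> L x y <= A x y) ->
  rownorm (ksub L (balance (kmin L B))) x <= 2 * rownorm (ksub A B) x.
Proof.
move=> Lmass LA; set C := balance (kmin L B).
have offC y : y != x -> Rabs (ksub L C x y) <= Rabs (ksub A B x y).
  by move=> yx; rewrite /ksub /C balance_offdiag //; apply: Rabs_sub_Rmin; apply: LA.
have off_sum : \big[Rplus/0]_(y | y != x) Rabs (ksub L C x y) <= rownorm (ksub A B) x.
  apply: Rle_trans (sum_le offC) _.
  by apply: sum_pred_le => y; apply: Rabs_pos.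
have diagC : ksub L C x x = - \big[Rplus/0]_(y | y != x) ksub L C x y.
  have Cmass := kmass_balance (kmin L B) x; rewrite -/C kmass_diag in Cmass.
  by rewrite /ksub sum_sub; move: Lmass; rewrite kmass_diag; lra.
have := Rabs_sum_le (fun y => y != x) (ksub L C x).
by rewrite rownorm_diag diagC Rabs_Ropp; lra.
Qed.

Lemma rownorm_krowdiv_le (a : X -> R) amin K L r x :
  0 < amin -> amin <= a x -> norm_le (ksub K L) r ->
  rownorm (ksub (krowdiv a K) (krowdiv a L)) x <= r / amin.
Proof.
move=> amin_gt0 amin_le /norm_leP KLr; have a_gt0 : 0 < a x by lra.
have -> : rownorm (ksub (krowdiv a K) (krowdiv a L)) x = rownorm (ksub K L) x / a x.
  rewrite /Rdiv Rmult_comm -sum_scale; apply: eq_bigr => y _.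
  have -> : ksub (krowdiv a K) (krowdiv a L) x y = ksub K L x y * / a x.
    by rewrite /ksub /krowdiv /Rdiv; ring.
  by rewrite Rabs_mult Rabs_inv (Rabs_pos_eq (a x)); [ring | lra].
apply: Rmult_le_compat; first by apply: sum_ge0 => y _; apply: Rabs_pos.
- by apply/Rlt_le/Rinv_0_lt_compat.
- exact: KLr.
- exact: Rinv_le_contravar.
Qed.

Definition diff_quotient (MM : kernel X -> kernel X -> Prop) (t : R) K L : Prop :=
  exists M, MM (kadd (@kid X) (kscale t K)) M /\ L = kscale (/ t) (ksub M (@kid X)).

End Kernels.

Section AverageValueAtRisk.
Variables (X : finType) (alpha : X -> R).
Hypothesis alpha_gt0 : forall x, 0 < alpha x.
Implicit Types (K L D : kernel X) (x y : X).

Let avar_quotient := diff_quotient (risk_multikernel (avar_dual alpha)).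

Lemma avar_quotient_rate t Kn L :
  0 < t -> avar_quotient t Kn L ->
  rate_kernel L /\ forall x y, y != x -> L x y <= Kn x y / alpha x.
Proof.
move=> t_gt0 [M [[Mst Mdual] ->]]; split; first exact: rate_kernel_diff_quotient.
move=> x y yx; have := (Mdual x).2 y.
rewrite /kadd /kscale /ksub kid_offdiag // Rplus_0_l Rminus_0_r => Mxy.
have := Rmult_le_compat_l (/ t) _ _ (Rlt_le _ _ (Rinv_0_lt_compat _ t_gt0)) Mxy.
have -> // : / t * (t * Kn x y / alpha x) = Kn x y / alpha x.
by field; have := alpha_gt0 x; lra.
Qed.

(* The smallness of [t] keeps the AVaR bound on the diagonal inactive and the
   diagonal of [I + t L] nonnegative. *)
Lemma avar_quotient_intro t Kn L :
  0 < t -> rate_kernel Kn -> rate_kernel L ->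
  (forall x y, y != x -> L x y <= Kn x y / alpha x) ->
  (forall x, t * Rabs (Kn x x) <= Rmin (alpha x) (1 - alpha x)) ->
  avar_quotient t Kn L.
Proof.
move=> t_gt0 [_ Knmass] [Loff Lmass] LKn small.
have Ldiag x : Kn x x / alpha x <= L x x.
  apply: (diag_ge_of_offdiag_le (K := krowdiv alpha Kn)); last exact: LKn.
  by rewrite Lmass kmass_krowdiv Knmass /Rdiv Rmult_0_l.
have inv_alpha x : alpha x * / alpha x = 1 by apply: Rinv_r; have := alpha_gt0 x; lra.
have inv_alpha_gt0 x : 0 < / alpha x by apply: Rinv_0_lt_compat.
have small_l x : t * Rabs (Kn x x) <= alpha x.
  by have := small x; have := Rmin_l (alpha x) (1 - alpha x); lra.
have small_r x : t * Rabs (Kn x x) <= 1 - alpha x.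
  by have := small x; have := Rmin_r (alpha x) (1 - alpha x); lra.
have Mst : stochastic (kadd (@kid X) (kscale t L)).
  apply: stochastic_kid_add => // [|x]; first lra.
  have Kn_abs := Rle_abs (- Kn x x); rewrite Rabs_Ropp in Kn_abs.
  have ia_ge0 := Rlt_le _ _ (inv_alpha_gt0 x).
  apply: (Rle_trans _ (t * Rabs (Kn x x) * / alpha x)).
    have := Rmult_le_compat_l t _ _ (Rlt_le _ _ t_gt0) (Ldiag x).
    have := Rmult_le_compat_r _ _ _ ia_ge0 (Rmult_le_compat_l t _ _ (Rlt_le _ _ t_gt0) Kn_abs).
    by rewrite /Rdiv; lra.
  by rewrite -(inv_alpha x); apply: Rmult_le_compat_r.
exists (kadd (@kid X) (kscale t L)); split; last first.
  apply: functional_extensionality => x; apply: functional_extensionality => y.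
  by rewrite /kscale /ksub /kadd; field; lra.
split=> // x; split=> // y; rewrite /kadd /kscale; have [->|yx] := eqVneq y x.
- rewrite kid_diag /Rdiv.
  have Lxx := rate_kernel_diag_le0 x (conj Loff Lmass).
  have alpha_le : alpha x <= 1 + t * Kn x x.
    have Kn_abs := Rle_abs (- Kn x x); rewrite Rabs_Ropp in Kn_abs.
    by have := small_r x; nra.
  apply: (Rle_trans _ 1); first nra.
  rewrite -{1}(inv_alpha x); exact: Rmult_le_compat_r (Rlt_le _ _ (inv_alpha_gt0 x)) alpha_le.
- rewrite kid_offdiag // !Rplus_0_l /Rdiv Rmult_assoc.
  by apply: Rmult_le_compat_l; [lra | apply: LKn].
Qed.

Lemma avar_semideriv_balance_kmin K L :
  rate_kernel K -> (forall x y, y != x -> 0 <= L x y) ->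
  avar_semideriv alpha K (balance (kmin L (krowdiv alpha K))).
Proof.
move=> [Koff _] Loff.
have Doff x y : y != x -> 0 <= kmin L (krowdiv alpha K) x y.
  move=> yx; apply: Rmin_glb; first exact: Loff.
  apply: Rmult_le_pos; first exact: Koff.
  exact/Rlt_le/Rinv_0_lt_compat/alpha_gt0.
have rateD := rate_kernel_balance Doff.
split; first exact/tangent_coneP.
split; last exact: rateD.2.
by move=> x y /eqP yx; rewrite balance_offdiag //; split; [apply: Doff | apply: Rmin_r].
Qed.

Variable amin : R.
Hypotheses (amin_gt0 : 0 < amin) (amin_le_alpha : forall x, amin <= alpha x).

Lemma avar_quotient_near_semideriv t K Kn L r :
  0 < t -> rate_kernel K -> norm_le (ksub Kn K) r -> avar_quotient t Kn L ->
  exists D, avar_semideriv alpha K D /\ norm_le (ksub L D) (2 * (r / amin)).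
Proof.
move=> t_gt0 rateK KnK /(avar_quotient_rate t_gt0) [[Loff Lmass] LKn].
exists (balance (kmin L (krowdiv alpha K))).
split; first exact: avar_semideriv_balance_kmin.
apply/norm_leP => x.
apply: Rle_trans (rownorm_sub_balance_kmin (A := krowdiv alpha Kn) _ (Lmass x) (LKn x)) _.
by apply: Rmult_le_compat_l; [lra | apply: rownorm_krowdiv_le].
Qed.

Lemma avar_semideriv_near_quotient t K Kn D r :
  0 < t -> rate_kernel Kn ->
  (forall x, t * Rabs (Kn x x) <= Rmin (alpha x) (1 - alpha x)) ->
  norm_le (ksub Kn K) r -> avar_semideriv alpha K D ->
  exists L, avar_quotient t Kn L /\ norm_le (ksub D L) (2 * (r / amin)).
Proof.
move=> t_gt0 rateKn small KnK [_ [DK Dmass]].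
have Doff x y : y != x -> 0 <= D x y by move=> /eqP yx; case: (DK x y yx).
have DK' x y : y != x -> D x y <= krowdiv alpha K x y by move=> /eqP yx; case: (DK x y yx).
have [tcL [LKn _]] := avar_semideriv_balance_kmin rateKn Doff.
exists (balance (kmin D (krowdiv alpha Kn))); split.
- apply: avar_quotient_intro => //; first exact/tangent_coneP.
  by move=> x y /eqP yx; case: (LKn x y yx).
- apply/norm_leP => x.
  apply: Rle_trans (rownorm_sub_balance_kmin (krowdiv alpha Kn) (Dmass x) (DK' x)) _.
  apply: Rmult_le_compat_l; first lra.
  by apply: rownorm_krowdiv_le => //; apply: norm_le_ksubC.
Qed.

End AverageValueAtRisk.

Theorem theorem7p6 (X : finType) (alpha : X -> R) (amin amax : R) :
  0 < amin -> amin <= amax -> amax < 1 ->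
  (forall x, amin <= alpha x <= amax) ->
  forall K : kernel X, tangent_cone K ->
    semi_differentiable (risk_multikernel (avar_dual alpha)) K
      (avar_semideriv alpha K).
Proof.
move=> amin_gt0 amin_le_amax amax_lt1 alpha_bnd K /tangent_coneP rateK.
have amin_le x : amin <= alpha x := (alpha_bnd x).1.
have alpha_gt0 x : 0 < alpha x by have := amin_le x; lra.
split.
  exists (balance (kmin (fun _ _ => 0) (krowdiv alpha K))).
  by apply: avar_semideriv_balance_kmin => // x y _; lra.
move=> epsn Kn epsn_gt0 _ epsn_to0 tcKn Kn_toK e e_gt0.
pose c := Rmin amin (1 - amax).
have c_gt0 : 0 < c by apply: Rmin_glb_lt; lra.
have B_gt0 := diag_bound_gt0 K.
have [N1 Kn_near1] := Kn_toK 1 Rlt_0_1.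
have [N2 Kn_near] := Kn_toK (e * amin / 2) ltac:(nra).
have [N3 epsn_small] := epsn_to0 (c / diag_bound K) (Rdiv_lt_0_compat _ _ c_gt0 B_gt0).
exists (maxn N1 (maxn N2 N3)) => n; rewrite !geq_max => /and3P [n1 n2 n3].
have /tangent_coneP rateKn := tcKn n.
have small x : epsn n * Rabs (Kn n x x) <= Rmin (alpha x) (1 - alpha x).
  have c_le : c <= Rmin (alpha x) (1 - alpha x).
    have := Rmin_l amin (1 - amax); have := Rmin_r amin (1 - amax); have := alpha_bnd x.
    by rewrite -/c => *; apply: Rmin_glb; lra.
  apply: Rle_trans c_le; apply: Rle_trans (_ : c / diag_bound K * diag_bound K <= c).
    apply: Rmult_le_compat; [exact: Rlt_le _ _ (epsn_gt0 n) | exact: Rabs_pos | |].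
    + exact: epsn_small.
    + exact: Rabs_diag_le_bound_near (Kn_near1 n n1).
  by right; field; lra.
have -> : e = 2 * ((e * amin / 2) / amin) by field; lra.
split=> [L | D].
- exact: (avar_quotient_near_semideriv alpha_gt0 amin_gt0 amin_le
    (epsn_gt0 n) rateK (Kn_near n n2)).
- exact: (avar_semideriv_near_quotient alpha_gt0 amin_gt0 amin_le
    (epsn_gt0 n) rateKn small (Kn_near n n2)).
Qed.
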